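(* Let $d>1$ and let $L$ be an infinite simple modular ortholattice of height $d(L)=d$. Then $L$ has no finite test set.
   Context: A modular ortholattice (MOL) is a modular lattice with bounds $0,1$ together with an orthocomplementation $x\mapsto x'$ (an order-reversing involution with $x\wedge x'=0$, $x\vee x'=1$); its height is $d$ if maximal chains have $d+1$ elements. A subset $S\subseteq L$ is a test set for $L$ if every ortholattice identity which holds under all assignments of its variables to elements of $S$ holds in $L$. *)

From Stdlib Require Import List Arith.
Import ListNotations.

Record MOL := {
  car :> Type;
  meet : car -> car -> car;
  join : car -> car -> car;
  ocomp : car -> car;
  bot : car;
  top : car;
  meetC : forall x y, meet x y = meet y x;
  joinC : forall x y, join x y = join y x;
  meetA : forall x y z, meet x (meet y z) = meet (meet x y) z;
  joinA : forall x y z, join x (join y z) = join (join x y) z;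
  meetJ : forall x y, meet x (join x y) = x;
  joinM : forall x y, join x (meet x y) = x;
  bot_min : forall x, join bot x = x;
  top_max : forall x, meet top x = x;
  modular : forall x y z, meet x z = x -> join x (meet y z) = meet (join x y) z;
  ocomp_antitone : forall x y, meet x y = x -> meet (ocomp y) (ocomp x) = ocomp y;
  ocompK : forall x, ocomp (ocomp x) = x;
  meet_ocomp : forall x, meet x (ocomp x) = bot;
  join_ocomp : forall x, join x (ocomp x) = top
}.

Arguments meet {m}. Arguments join {m}. Arguments ocomp {m}.
Arguments bot {m}. Arguments top {m}.

Definition le {L : MOL} (x y : L) : Prop := meet x y = x.

Definition has_card {T : Type} (P : T -> Prop) (n : nat) : Prop :=
  exists l : list T, NoDup l /\ length l = n /\ (forall x, P x <-> In x l).

Definition is_chain {L : MOL} (C : L -> Prop) : Prop :=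
  forall x y, C x -> C y -> le x y \/ le y x.

Definition is_maximal_chain {L : MOL} (C : L -> Prop) : Prop :=
  is_chain C /\ forall D : L -> Prop, is_chain D -> (forall x, C x -> D x) ->
    forall x, D x -> C x.

Definition has_height (L : MOL) (d : nat) : Prop :=
  forall C : L -> Prop, is_maximal_chain C -> has_card C (S d).

Definition is_congruence {L : MOL} (R : L -> L -> Prop) : Prop :=
  (forall x, R x x) /\ (forall x y, R x y -> R y x) /\
  (forall x y z, R x y -> R y z -> R x z) /\
  (forall x x' y y', R x x' -> R y y' -> R (meet x y) (meet x' y')) /\
  (forall x x' y y', R x x' -> R y y' -> R (join x y) (join x' y')) /\
  (forall x x', R x x' -> R (ocomp x) (ocomp x')).

Definition simple (L : MOL) : Prop :=
  (bot : L) <> top /\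
  forall R : L -> L -> Prop, is_congruence R ->
    (forall x y, R x y -> x = y) \/ (forall x y, R x y).

Definition finite_type (T : Type) : Prop := exists l : list T, forall x, In x l.
Definition finite_set {T : Type} (S : T -> Prop) : Prop :=
  exists l : list T, forall x, S x <-> In x l.

Inductive term :=
| Var : nat -> term
| TMeet : term -> term -> term
| TJoin : term -> term -> term
| TComp : term -> term
| TBot : term
| TTop : term.

Fixpoint eval {L : MOL} (v : nat -> L) (t : term) : L :=
  match t with
  | Var n => v n
  | TMeet a b => meet (eval v a) (eval v b)
  | TJoin a b => join (eval v a) (eval v b)
  | TComp a => ocomp (eval v a)
  | TBot => bot
  | TTop => top
  end.

Definition holds_in {L : MOL} (S : L -> Prop) (s t : term) : Prop :=
  forall v : nat -> L, (forall n, S (v n)) -> eval v s = eval v t.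

Definition test_set {L : MOL} (S : L -> Prop) : Prop :=
  forall s t : term, holds_in S s t -> holds_in (fun _ : car L => True) s t.

From Stdlib Require Import List Arith Lia Classical ClassicalEpsilon.
From mathcomp Require classical_sets.
Import ListNotations.

(* Combinatorial part: call m-diamond a family of m distinct elements any
   two of which have the same meet a and the same join c.  If L had no
   m-diamond, then by induction on the maximal chain length every interval
   [a, b] would be finite: over a fixed atom p of [a, b] the joins p \/ q
   with the atoms q lie in the finite interval [p, b], and m+1 atoms
   with a common join would form an m-diamond by the modular law.  Applied
   to [bot, top] (chains have at most d+1 elements by Zorn's lemma) this
   contradicts infiniteness, so L contains m-diamonds for every m.

   Equational part: the identity \/_{i<j<m} ((x_i /\ x_j) \/ (x_i' /\ x_j')) = 1
   holds on any set with fewer than m elements, since two variables must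
   receive the same value and x \/ x' = 1.  On an m-diamond it evaluates to
   a \/ c', and a \/ c' = 1 with a <= c forces a = c by modularity, which
   is impossible.  So no finite set is a test set. *)

Lemma meet_idem {L : MOL} (x : L) : meet x x = x.
Proof. rewrite <- (joinM L x x) at 2. apply meetJ. Qed.

Lemma le_refl {L : MOL} (x : L) : le x x.
Proof. apply meet_idem. Qed.

Lemma le_antisym {L : MOL} (x y : L) : le x y -> le y x -> x = y.
Proof. unfold le; intros H1 H2. rewrite <- H1, meetC; exact H2. Qed.

Lemma le_trans {L : MOL} (x y z : L) : le x y -> le y z -> le x z.
Proof. unfold le; intros H1 H2. rewrite <- H1, <- meetA, H2; reflexivity. Qed.

Lemma le_join {L : MOL} (x y : L) : le x y <-> join x y = y.
Proof.
  unfold le; split; intro H.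
  - rewrite <- H, joinC, meetC. apply joinM.
  - rewrite <- H. apply meetJ.
Qed.

Lemma meet_lb1 {L : MOL} (x y : L) : le (meet x y) x.
Proof. unfold le. rewrite (meetC _ x y), <- meetA, meet_idem. reflexivity. Qed.

Lemma meet_lb2 {L : MOL} (x y : L) : le (meet x y) y.
Proof. unfold le. rewrite <- meetA, meet_idem. reflexivity. Qed.

Lemma meet_glb {L : MOL} (x y z : L) : le z x -> le z y -> le z (meet x y).
Proof. unfold le; intros H1 H2. rewrite meetA, H1, H2. reflexivity. Qed.

Lemma join_ub1 {L : MOL} (x y : L) : le x (join x y).
Proof. apply meetJ. Qed.

Lemma join_ub2 {L : MOL} (x y : L) : le y (join x y).
Proof. rewrite joinC. apply meetJ. Qed.

Lemma join_lub {L : MOL} (x y z : L) : le x z -> le y z -> le (join x y) z.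
Proof. rewrite !le_join; intros H1 H2. rewrite <- joinA, H2, H1. reflexivity. Qed.

Lemma le_top {L : MOL} (x : L) : le x top.
Proof. unfold le. rewrite meetC. apply top_max. Qed.

Lemma le_bot {L : MOL} (x : L) : le bot x.
Proof. apply le_join, bot_min. Qed.

Lemma join_bot {L : MOL} (x : L) : join x bot = x.
Proof. rewrite joinC; apply bot_min. Qed.

Lemma demorgan {L : MOL} (x y : L) : ocomp (join x y) = meet (ocomp x) (ocomp y).
Proof.
  apply le_antisym.
  - apply meet_glb; apply ocomp_antitone; [apply join_ub1 | apply join_ub2].
  - rewrite <- (ocompK L (meet (ocomp x) (ocomp y))). apply ocomp_antitone.
    apply join_lub; rewrite <- (ocompK L x) at 1; rewrite <- (ocompK L y) at 1;
      apply ocomp_antitone; [apply meet_lb1 | apply meet_lb2].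
Qed.

Lemma ocomp_top {L : MOL} : ocomp (top : L) = bot.
Proof. rewrite <- (meet_ocomp L top), top_max. reflexivity. Qed.

(* The hypothesis [has_height] only speaks about maximal
   chains; by the Hausdorff maximality principle (Zorn's lemma) every chain
   lies in a maximal one, so every finite chain has at most d+1 elements. *)

Definition chain_list {L : MOL} (l : list L) : Prop := is_chain (fun x => In x l).

Lemma chain_extends_to_maximal {L : MOL} (C0 : L -> Prop) :
  is_chain C0 -> exists M, is_maximal_chain M /\ forall x, C0 x -> M x.
Proof.
  intros HC0.
  set (P := fun C : L -> Prop => is_chain (fun x => C0 x \/ C x)).
  destruct (@classical_sets.Zorn_bigcup L P) as [A [HA Amax]].
  - intros F HFP Htot x y Hx Hy.
    destruct Hx as [Hx | [D1 HD1 Hx]]; destruct Hy as [Hy | [D2 HD2 Hy]].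
    + apply HC0; assumption.
    + apply (HFP D2 HD2); auto.
    + apply (HFP D1 HD1); auto.
    + destruct (Htot D1 D2 HD1 HD2) as [H12 | H21].
      * apply (HFP D2 HD2); auto.
      * apply (HFP D1 HD1); auto.
  - exists (fun x => C0 x \/ A x). split; [split; [exact HA |] | auto].
    intros D HD HsubD x Hx. apply NNPP; intro Hn.
    apply (Amax D).
    + split; [intros y Hy; auto | intro HDA; apply Hn; auto].
    + intros u w [Hu | Hu] [Hw | Hw]; apply HD; auto.
Qed.

Lemma chain_length_bound (L : MOL) (d : nat) : has_height L d ->
  forall l : list L, NoDup l -> chain_list l -> length l <= S d.
Proof.
  intros Hh l Hnd Hch.
  destruct (chain_extends_to_maximal _ Hch) as [M [HM Hincl]].
  destruct (Hh M HM) as [lM [_ [Hlen HlM]]].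
  rewrite <- Hlen. apply NoDup_incl_length; auto.
  intros x Hx. apply HlM, Hincl, Hx.
Qed.

(* General counting facts.  [decide] turns a classical proposition into
   a boolean, so that lists can be filtered by arbitrary predicates. *)

Definition decide (P : Prop) : bool :=
  if excluded_middle_informative P then true else false.

Lemma decide_spec (P : Prop) : decide P = true <-> P.
Proof. unfold decide; destruct excluded_middle_informative; split; congruence. Qed.

Lemma pigeonhole {T U : Type} (m : nat) (f : T -> U) (J : list U) :
  forall A : list T, NoDup A -> (forall q, In q A -> In (f q) J) ->
  m * length J < length A ->
  exists c B, NoDup B /\ m < length B /\ forall q, In q B -> In q A /\ f q = c.
Proof.
  induction J as [| c0 J IH]; intros A Hnd HA Hlt.
  - destruct A as [| q A]; simpl in Hlt; [lia |]. destruct (HA q (or_introl eq_refl)).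
  - set (A0 := filter (fun q => decide (f q = c0)) A).
    set (A1 := filter (fun q => negb (decide (f q = c0))) A).
    assert (Hsplit : length A0 + length A1 = length A) by apply filter_length.
    destruct (Nat.lt_ge_cases m (length A0)) as [Hbig | Hsmall].
    + exists c0, A0. split; [apply NoDup_filter, Hnd | split; [exact Hbig |]].
      intros q Hq. apply filter_In in Hq as [Hq Hfq]. split; [exact Hq | apply decide_spec, Hfq].
    + destruct (IH A1) as [c [B [HB [HmB HBA]]]].
      * apply NoDup_filter, Hnd.
      * intros q Hq. apply filter_In in Hq as [Hq Hfq].
        destruct (HA q Hq) as [E | E]; [| exact E].
        rewrite (proj2 (decide_spec _) (eq_sym E)) in Hfq. discriminate.
      * simpl in Hlt. lia.
      * exists c, B. split; [exact HB | split; [exact HmB |]].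
        intros q Hq. destruct (HBA q Hq) as [HqA Hfq].
        split; [apply filter_In in HqA as [HqA _]; exact HqA | exact Hfq].
Qed.

(* A predicate of which we only know an upper bound on the size of its
   duplicate-free lists is exactly enumerated by a maximal such list. *)
Lemma enumerate_bounded {T : Type} (P : T -> Prop) (N : nat) :
  (forall A, NoDup A -> (forall q, In q A -> P q) -> length A <= N) ->
  exists A, forall q, P q <-> In q A.
Proof.
  intros HN.
  assert (Hgrow : forall f A, NoDup A -> (forall q, In q A -> P q) ->
            N <= length A + f -> exists A', forall q, P q <-> In q A').
  { induction f as [| f IH]; intros A Hnd HA Hle.
    - exists A. intros q; split; [| apply HA]. intros Hq. apply NNPP; intros Hn.
      assert (length (q :: A) <= N) by
        (apply HN; [constructor; auto | intros r [<- | Hr]; auto]).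
      simpl in *; lia.
    - destruct (classic (exists q, P q /\ ~ In q A)) as [[q [Hq Hn]] | Hall].
      + apply (IH (q :: A)); [constructor; auto | intros r [<- | Hr]; auto | simpl; lia].
      + exists A. intros q; split; [| apply HA]. intros Hq. apply NNPP; intros Hn.
        apply Hall; eauto. }
  apply (Hgrow N []); [constructor | intros q [] | simpl; lia].
Qed.

Definition listed {T : Type} (P : T -> Prop) : Prop :=
  exists l : list T, forall x, P x -> In x l.

Lemma listed_union {T U : Type} (F : T -> U -> Prop) (A : list T) :
  (forall p, In p A -> listed (F p)) -> listed (fun x => exists p, In p A /\ F p x).
Proof.
  induction A as [| p A IH]; intros HA.
  - exists []. intros x [p [[] _]].
  - destruct (HA p (or_introl eq_refl)) as [J1 HJ1].
    destruct IH as [J2 HJ2]; [intros q Hq; apply HA; right; exact Hq |].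
    exists (J1 ++ J2). intros x [q [[<- | Hq] Hx]]; apply in_or_app; [left; auto | right].
    apply HJ2; eauto.
Qed.

Definition interval {L : MOL} (a b x : L) : Prop := le a x /\ le x b.

Definition chain_bounded {L : MOL} (k : nat) (a b : L) : Prop :=
  forall l, NoDup l -> chain_list l -> (forall x, In x l -> interval a b x) -> length l <= k.

Definition covers {L : MOL} (a p : L) : Prop :=
  le a p /\ p <> a /\ forall y, le a y -> le y p -> y = a \/ y = p.

Lemma chain_list_cons {L : MOL} (z : L) (l : list L) :
  chain_list l -> (forall y, In y l -> le z y \/ le y z) -> chain_list (z :: l).
Proof.
  intros Hl Hz u w [<- | Hu] [<- | Hw].
  - left; apply le_refl.
  - exact (Hz w Hw).
  - destruct (Hz u Hu); auto.
  - apply Hl; assumption.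
Qed.

Lemma chain_bounded_empty {L : MOL} (a b x : L) : chain_bounded 0 a b -> ~ interval a b x.
Proof.
  intros H Hx. assert (length [x] <= 0); [| simpl in *; lia].
  apply H; [repeat constructor; intros [] | | intros y [<- | []]; exact Hx].
  apply chain_list_cons; [intros u w [] | intros y []].
Qed.

Lemma chain_bounded_sub {L : MOL} k (a b b' : L) :
  chain_bounded k a b -> le b' b -> chain_bounded k a b'.
Proof.
  intros H Hb l Hnd Hch Hl. apply H; auto.
  intros x Hx. destruct (Hl x Hx). split; [| apply le_trans with b']; auto.
Qed.

Lemma chain_bounded_above {L : MOL} k (a b x : L) :
  chain_bounded (S k) a b -> interval a b x -> x <> a -> chain_bounded k x b.
Proof.
  intros H [Hax Hxb] Hne l Hnd Hch Hl.
  assert (length (a :: l) <= S k); [| simpl in *; lia].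
  apply H.
  - constructor; [| exact Hnd]. intros Ha. apply Hne, le_antisym; [apply (Hl a Ha) | exact Hax].
  - apply chain_list_cons; [exact Hch |]. intros y Hy. left.
    apply le_trans with x; [exact Hax | apply (Hl y Hy)].
  - intros y [<- | Hy]; [split; [apply le_refl | apply le_trans with x; auto] |].
    destruct (Hl y Hy). split; [apply le_trans with x |]; auto.
Qed.

Lemma chain_bounded_below {L : MOL} k (a b y : L) :
  chain_bounded (S k) a b -> interval a b y -> y <> b -> chain_bounded k a y.
Proof.
  intros H [Hay Hyb] Hne l Hnd Hch Hl.
  assert (length (b :: l) <= S k); [| simpl in *; lia].
  apply H.
  - constructor; [| exact Hnd]. intros Hb. apply Hne, le_antisym; [exact Hyb | apply (Hl b Hb)].
  - apply chain_list_cons; [exact Hch |]. intros x Hx. right.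
    apply le_trans with y; [apply (Hl x Hx) | exact Hyb].
  - intros x [<- | Hx]; [split; [apply le_trans with y; auto | apply le_refl] |].
    destruct (Hl x Hx). split; [| apply le_trans with y]; auto.
Qed.

Lemma cover_below {L : MOL} k (a b x : L) :
  chain_bounded k a b -> interval a b x -> x <> a -> exists p, covers a p /\ le p x.
Proof.
  intros Hk [Hax Hxb]. apply (chain_bounded_sub _ _ _ _ Hk) in Hxb. clear b Hk.
  revert x Hxb Hax. induction k as [| k IH]; intros x Hk Hax Hne.
  - exfalso. apply (chain_bounded_empty a x x Hk). split; [exact Hax | apply le_refl].
  - destruct (classic (exists y, le a y /\ le y x /\ y <> a /\ y <> x))
      as [[y [Hay [Hyx [Hya Hyx']]]] | Hno].
    + destruct (IH y) as [p [Hp Hpy]]; auto.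
      * apply chain_bounded_below with x; auto. split; assumption.
      * exists p. split; [exact Hp | apply le_trans with y; assumption].
    + exists x. split; [| apply le_refl].
      split; [exact Hax | split; [exact Hne |]]. intros y Hay Hyx.
      destruct (classic (y = a)) as [E | Ea]; [left; exact E | right].
      apply NNPP; intros Ex. apply Hno. eauto 6.
Qed.

Lemma covers_meet {L : MOL} (a p q : L) : covers a p -> covers a q -> p <> q -> meet p q = a.
Proof.
  intros [Hap [Hpa Hp]] [Haq [_ Hq]] Hne.
  destruct (Hp (meet p q)) as [E | E]; [apply meet_glb; auto | apply meet_lb1 | exact E |].
  exfalso. destruct (Hq p) as [E2 | E2]; [exact Hap | exact E | exact (Hpa E2) | exact (Hne E2)].
Qed.

Lemma covers_join {L : MOL} (a p q q' c : L) :
  covers a p -> covers a q -> covers a q' -> q <> q' ->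
  join p q = c -> join p q' = c -> join q q' = c.
Proof.
  intros [Hap [_ Hp]] [Haq [Hqa Hq]] [Haq' [Hq'a _]] Hne E1 E2.
  set (y := join q q').
  assert (Hyc : le y c).
  { apply join_lub; [rewrite <- E1 | rewrite <- E2]; apply join_ub2. }
  assert (Hmod : join q (meet p y) = y).
  { rewrite (modular L q p y) by apply join_ub1. rewrite joinC, E1, meetC. exact Hyc. }
  destruct (Hp (meet p y)) as [E | E].
  - apply meet_glb; [exact Hap | apply le_trans with q; [exact Haq | apply join_ub1]].
  - apply meet_lb1.
  - (* then q = q v q', so q' <= q, impossible for two distinct atoms *)
    exfalso. rewrite E, joinC, (proj1 (le_join a q) Haq) in Hmod.
    destruct (Hq q') as [E3 | E3]; [exact Haq' | rewrite Hmod; apply join_ub2 | exact (Hq'a E3) | exact (Hne (eq_sym E3))].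
  - (* then p <= y, so c = p v q <= y *)
    assert (Hpy : le p y) by (rewrite <- E; apply meet_lb2).
    apply le_antisym; [exact Hyc | rewrite <- E1; apply join_lub; [exact Hpy | apply join_ub1]].
Qed.

Definition diamond (L : MOL) (m : nat) : Prop :=
  exists (a c : L) (l : list L), NoDup l /\ m <= length l /\
    forall x y, In x l -> In y l -> x <> y -> meet x y = a /\ join x y = c.

(* Without m-diamonds, an interval [a, b] whose upper part [p, b] over an
   atom p is listed by J has at most m * |J| atoms: the joins with p land in
   J, and m+1 atoms with a common join with p would form an m-diamond. *)
Lemma atoms_bound {L : MOL} m (a b p : L) (J : list L) :
  ~ diamond L m -> covers a p -> le p b -> (forall x, interval p b x -> In x J) ->
  forall A, NoDup A -> (forall q, In q A -> covers a q /\ le q b) -> length A <= m * length J.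
Proof.
  intros Hno Hp Hpb HJ A Hnd HA.
  destruct (Nat.le_gt_cases (length A) (m * length J)) as [Hle | Hgt]; [exact Hle |].
  exfalso. destruct (pigeonhole m (join p) J A Hnd) as [c [B [HB [HmB HBA]]]].
  - intros q Hq. apply HJ. split; [apply join_ub1 |].
    apply join_lub; [exact Hpb | apply HA, Hq].
  - exact Hgt.
  - apply Hno. exists a, c, B. split; [exact HB | split; [lia |]].
    intros x y Hx Hy Hxy. destruct (HBA x Hx) as [HxA Ex], (HBA y Hy) as [HyA Ey].
    split; [apply covers_meet | apply (covers_join a p)]; auto; apply HA; auto.
Qed.

(* By induction on the bound: the intervals [p, b] over the atoms p of
   [a, b] are finite, hence there are finitely many atoms, and [a, b] is
   {a} together with the union of these intervals. *)
Lemma interval_listed {L : MOL} (m : nat) : ~ diamond L m ->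
  forall k (a b : L), chain_bounded k a b -> listed (interval a b).
Proof.
  intros Hno k. induction k as [| k IH]; intros a b Hk.
  - exists []. intros x Hx. exact (chain_bounded_empty a b x Hk Hx).
  - assert (Hup : forall p, covers a p -> le p b -> listed (interval p b)).
    { intros p [Hap [Hpa _]] Hpb. apply IH, chain_bounded_above with a; auto. split; auto. }
    assert (Hatoms : exists A, forall q, covers a q /\ le q b <-> In q A).
    { destruct (classic (exists p, covers a p /\ le p b)) as [[p [Hp Hpb]] | Hnone].
      - destruct (Hup p Hp Hpb) as [J HJ].
        apply enumerate_bounded with (m * length J). apply (atoms_bound m a b p); auto.
      - exists []. intros q; split; [intros Hq; apply Hnone; exists q; exact Hq | intros []]. }
    destruct Hatoms as [A HA].
    destruct (listed_union (fun p => interval p b) A) as [J HJ].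
    { intros p Hp. apply HA in Hp as [Hp Hpb]. apply Hup; assumption. }
    exists (a :: J). intros x Hx.
    destruct (classic (x = a)) as [E | Ne]; [left; auto | right].
    destruct (cover_below (S k) a b x Hk Hx Ne) as [p [Hp Hpx]].
    apply HJ. exists p. split.
    + apply HA. split; [exact Hp | apply le_trans with x; [exact Hpx | apply Hx]].
    + split; [exact Hpx | apply Hx].
Qed.

(* An infinite modular lattice of finite height contains m-diamonds for
   every m: otherwise the whole lattice [bot, top] would be finite. *)
Lemma diamonds_exist (L : MOL) (d : nat) :
  has_height L d -> ~ finite_type L -> forall m, diamond L m.
Proof.
  intros Hh Hinf m. apply NNPP; intros Hno. apply Hinf.
  destruct (interval_listed m Hno (S d) bot top) as [l Hl].
  - intros l Hnd Hch _. apply (chain_length_bound L d Hh); assumption.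
  - exists l. intros x. apply Hl. split; [apply le_bot | apply le_top].
Qed.

(* For m variables it states
     \/_{i < j < m} ((x_i /\ x_j) \/ (x_i' /\ x_j')) = 1.
   It holds under any assignment that repeats a value (since x \/ x' = 1),
   hence in every set with fewer than m elements, but it fails on m elements
   of a diamond. *)

Definition pair_term (i j : nat) : term :=
  TJoin (TMeet (Var i) (Var j)) (TMeet (TComp (Var i)) (TComp (Var j))).

Fixpoint big_join (t : nat -> term) (n : nat) : term :=
  match n with
  | 0 => TBot
  | S n => TJoin (big_join t n) (t n)
  end.

Definition diamond_term (m : nat) : term :=
  big_join (fun j => big_join (fun i => pair_term i j) j) m.

Lemma big_join_ub {L : MOL} (v : nat -> L) (t : nat -> term) (n i : nat) :
  i < n -> le (eval v (t i)) (eval v (big_join t n)).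
Proof.
  induction n as [| n IH]; intros Hi; [lia |]. simpl.
  destruct (Nat.eq_dec i n) as [-> | Ne]; [apply join_ub2 |].
  apply le_trans with (eval v (big_join t n)); [apply IH; lia | apply join_ub1].
Qed.

Lemma big_join_lub {L : MOL} (v : nat -> L) (t : nat -> term) (n : nat) (w : L) :
  (forall i, i < n -> le (eval v (t i)) w) -> le (eval v (big_join t n)) w.
Proof.
  induction n as [| n IH]; intros H; simpl; [apply le_bot |].
  apply join_lub; [apply IH; intros i Hi; apply H; lia | apply H; lia].
Qed.

Lemma diamond_term_repeat {L : MOL} (v : nat -> L) (m i j : nat) :
  i < j < m -> v i = v j -> eval v (diamond_term m) = top.
Proof.
  intros Hij E. apply le_antisym; [apply le_top |].
  apply le_trans with (eval v (pair_term i j)).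
  - simpl. rewrite E, !meet_idem, join_ocomp. apply le_refl.
  - apply le_trans with (eval v (big_join (fun i => pair_term i j) j));
      [apply big_join_ub with (t := fun i => pair_term i j); lia |].
    exact (big_join_ub v (fun j => big_join (fun i => pair_term i j) j) m j (proj2 Hij)).
Qed.

Lemma identity_holds_in_small {L : MOL} (Sx : L -> Prop) (lS : list L) (m : nat) :
  (forall x, Sx x <-> In x lS) -> length lS < m -> holds_in Sx (diamond_term m) TTop.
Proof.
  intros HS Hm v Hv. simpl (eval v TTop).
  assert (Hrep : exists i j, i < j < m /\ v i = v j).
  { apply NNPP; intros Hno.
    assert (Hnd : NoDup (map v (seq 0 m))).
    { apply NoDup_map_NoDup_ForallPairs; [| apply seq_NoDup].
      intros i j Hi Hj E. apply in_seq in Hi, Hj.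
      destruct (Nat.lt_total i j) as [H | [H | H]]; [| exact H |];
        exfalso; apply Hno; [exists i, j | exists j, i]; split; auto; lia. }
    apply NoDup_incl_length with (l' := lS) in Hnd.
    - rewrite length_map, length_seq in Hnd. lia.
    - intros x Hx. apply in_map_iff in Hx as [i [<- _]]. apply HS, Hv. }
  destruct Hrep as [i [j [Hij E]]]. exact (diamond_term_repeat v m i j Hij E).
Qed.

Lemma diamond_term_bound {L : MOL} (v : nat -> L) (m : nat) (a c : L) :
  (forall i j, i < j < m -> meet (v i) (v j) = a /\ join (v i) (v j) = c) ->
  le (eval v (diamond_term m)) (join a (ocomp c)).
Proof.
  intros H. apply big_join_lub. intros j Hj. apply big_join_lub. intros i Hi.
  destruct (H i j) as [Ea Ec]; [lia |]. simpl.
  rewrite <- demorgan, Ea, Ec. apply le_refl.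
Qed.

Lemma orthomodular {L : MOL} (a c : L) : le a c -> join a (ocomp c) = top -> a = c.
Proof.
  intros Hac Htop.
  assert (Hz : meet (ocomp a) c = bot).
  { rewrite <- (ocompK L c) at 1. rewrite <- demorgan, Htop. apply ocomp_top. }
  pose proof (modular L a (ocomp a) c Hac) as Hmod.
  rewrite Hz, join_bot, join_ocomp, top_max in Hmod. exact Hmod.
Qed.

Lemma meet_eq_join {L : MOL} (x y : L) : meet x y = join x y -> x = y.
Proof.
  intros E. apply le_antisym.
  - apply le_trans with (join x y); [apply join_ub1 | rewrite <- E; apply meet_lb2].
  - apply le_trans with (join x y); [apply join_ub2 | rewrite <- E; apply meet_lb1].
Qed.

Lemma identity_fails_on_diamond (L : MOL) (m : nat) :
  2 <= m -> diamond L m -> ~ holds_in (fun _ : L => True) (diamond_term m) TTop.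
Proof.
  intros Hm [a [c [l [Hnd [Hlen Hl]]]]] Hid.
  set (v := fun i => nth i l bot).
  assert (Hv : forall i j, i < j < m -> meet (v i) (v j) = a /\ join (v i) (v j) = c).
  { intros i j Hij. apply Hl; try (apply nth_In; lia).
    intros E. apply NoDup_nth in E; [lia | exact Hnd | lia | lia]. }
  assert (Htop : join a (ocomp c) = top).
  { apply le_antisym; [apply le_top |].
    rewrite <- (Hid v (fun _ => I) : eval v (diamond_term m) = top).
    apply diamond_term_bound, Hv. }
  destruct (Hv 0 1) as [Ea Ec]; [lia |].
  assert (Hac : le a c).
  { rewrite <- Ea, <- Ec. apply le_trans with (v 0); [apply meet_lb1 | apply join_ub1]. }
  apply orthomodular in Htop; [| exact Hac].
  assert (E01 : v 0 = v 1) by (apply meet_eq_join; rewrite Ea, Ec; exact Htop).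
  apply NoDup_nth in E01; [discriminate | exact Hnd | lia | lia].
Qed.

(* Main theorem. *)
Theorem mainTheorem6 (L : MOL) (d : nat) :
  1 < d -> ~ finite_type L -> simple L -> has_height L d ->
  ~ (exists S : L -> Prop, finite_set S /\ test_set S).
Proof.
  intros _ Hinf _ Hh [Sx [[lS HS] Htest]].
  set (m := S (S (length lS))).
  apply (identity_fails_on_diamond L m); [lia | apply (diamonds_exist L d Hh Hinf) |].
  apply Htest, (identity_holds_in_small Sx lS); [exact HS | lia].
Qed.
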